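(* For every $n \in \mathbb{N}$ and all integers $h, t$ with $0 \le h \le 4$ and $1 \le t \le F_n$: (i) $a_{5(F_{n+1}-1)+hF_n+t+1} = 5F_{n+2} - 4 + hF_{n+1} + \lfloor (F_{n+1}+1+t)\varphi \rfloor - \lfloor (F_{n+1}+1)\varphi \rfloor$; (ii) $b_{5(F_{n+1}-1)+hF_n+t+1} = 5F_{n+3} + hF_{n+2} - 3 + t + \lfloor (F_{n+1}+1+t)\varphi \rfloor - \lfloor (F_{n+1}+1)\varphi \rfloor$, where $\varphi = \frac{1+\sqrt{5}}{2}$.
   Context: Fibonacci numbers: $F_1 = F_2 = 1$, $F_{i+2} = F_{i+1} + F_i$. Let $\sigma$ be the substitution on finite sequences over $\{1,2\}$ replacing each entry $1$ by $2$ and each entry $2$ by $2,1$. Let $C_{1,1} = (1)$, $C_{i+1,1} = \sigma(C_{i,1})$. For $i \in \mathbb{N}$ let $C_i$ be the concatenation of five copies of $C_{i,1}$. Let $(c_n)_{n \in \mathbb{N}}$ be the infinite sequence obtained by concatenating $C_1, C_2, C_3, \dots$ in order, and let $d_n = c_n + 1$. Define $a_1 = 6$, $a_n = 6 + \sum_{i=1}^{n-1} c_i$, and $b_1 = 12$, $b_n = 12 + \sum_{i=1}^{n-1} d_i$ for $n \in \mathbb{N}$. *)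

From Stdlib Require Import Arith List ZArith Reals.
Import ListNotations.
Open Scope R_scope.

Fixpoint fib (n : nat) : nat :=
  match n with
  | O => O
  | S m => match m with
           | O => 1%nat
           | S k => (fib m + fib k)%nat
           end
  end.

Definition sigma (w : list nat) : list nat :=
  flat_map (fun x => if Nat.eqb x 1 then [2%nat] else [2%nat; 1%nat]) w.

(* Cw k = C_{k+1,1}: C_{1,1} = (1), C_{i+1,1} = sigma (C_{i,1}). *)
Fixpoint Cw (k : nat) : list nat :=
  match k with
  | O => [1%nat]
  | S k' => sigma (Cw k')
  end.

Definition Cblock (i : nat) : list nat := concat (repeat (Cw (i - 1)) 5).

Definition cprefix (m : nat) : list nat := concat (map Cblock (seq 1 m)).

(* c_n (n >= 1), the n-th entry (1-indexed) of C_1 C_2 C_3 ...;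
   the prefix C_1...C_n has length >= 5n >= n, so this is well defined. *)
Definition c (n : nat) : nat := nth (n - 1) (cprefix n) 0%nat.

Definition d (n : nat) : nat := (c n + 1)%nat.

Definition a (n : nat) : nat := (6 + fold_right plus 0 (map c (seq 1 (n - 1))))%nat.
Definition b (n : nat) : nat := (12 + fold_right plus 0 (map d (seq 1 (n - 1))))%nat.

Definition phi : R := (1 + sqrt 5) / 2.

(* floor of a real number: Int_part r = up r - 1 is the floor of r. *)
Definition floorR (r : R) : Z := Int_part r.

From Pilot Require Import Defs.
From Stdlib Require Import Arith List ZArith Reals Lra Lia Zwf.
Import ListNotations.

(* For k >= 2 the word C_{k,1} is a prefix of the Fibonacci word whose i-th
   letter is floor((i+1) phi) - floor(i phi), so its first t letters sum to
   floor((t+1) phi) - 1.  This property is preserved by sigma, which comes down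
   to identities such as floor(floor(k phi) phi) = floor(k phi) + k - 1, each
   decided by the sign of the norm form k^2 - k m - m^2; that form never
   vanishes for m >= 1 because phi is irrational.  The index in the theorem
   points t letters into the (h+1)-st copy of C_{n,1} inside C_n, and since
   C_{n+2,1} = C_{n+1,1} C_{n,1}, those t letters sum to the stated difference
   of floors at F_{n+1} + 1 + t and F_{n+1} + 1. *)

Definition floor_phi (m : nat) : Z := floorR (INR m * phi).

Definition golden_form (k m : Z) : Z := (k * k - k * m - m * m)%Z.

Lemma golden_form_neq0 (k m : Z) :
  (0 <= k)%Z -> (1 <= m)%Z -> golden_form k m <> 0%Z.
Proof.
  revert k; induction m as [m IH] using (well_founded_induction (Zwf_well_founded 1)).
  intros k Hk Hm Hzero; unfold golden_form in Hzero.
  (* A zero forces [m < k < 2 m], and then [(m, k - m)] is a smaller zero. *)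
  assert (m < k < 2 * m)%Z by nia.
  apply (IH (k - m)%Z ltac:(red; lia) m); [lia | lia |]; unfold golden_form; nia.
Qed.

Lemma phi_gt1 : 1 < phi.
Proof.
  unfold phi; enough (1 < sqrt 5) by lra.
  rewrite <- sqrt_1; apply sqrt_lt_1; lra.
Qed.

Lemma phi_sq : phi * phi = phi + 1.
Proof.
  unfold phi; assert (H5 := sqrt_sqrt 5 ltac:(lra)); nra.
Qed.

Lemma IZR_golden_form (k m : Z) :
  IZR (golden_form k m) = (IZR k - IZR m * phi) * (IZR k + IZR m * (phi - 1)).
Proof.
  unfold golden_form; rewrite !minus_IZR, !mult_IZR.
  assert (Hphi := phi_sq); nra.
Qed.

Lemma le_mul_phi_iff (k m : Z) :
  (0 <= k)%Z -> (1 <= m)%Z -> IZR k <= IZR m * phi <-> (golden_form k m <= 0)%Z.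
Proof.
  intros Hk Hm.
  assert (Hpos : 0 < IZR k + IZR m * (phi - 1)).
  { apply IZR_le in Hk; apply IZR_le in Hm; assert (H := phi_gt1); nra. }
  split; intro H.
  - apply le_IZR; rewrite IZR_golden_form; nra.
  - apply IZR_le in H; rewrite IZR_golden_form in H; nra.
Qed.

Lemma floor_phi_spec (m : nat) : (1 <= m)%nat ->
  (0 <= floor_phi m)%Z /\ (golden_form (floor_phi m) (Z.of_nat m) < 0)%Z
  /\ (0 < golden_form (floor_phi m + 1) (Z.of_nat m))%Z.
Proof.
  intros Hm; unfold floor_phi, floorR; rewrite INR_IZR_INZ.
  destruct (base_Int_part (IZR (Z.of_nat m) * phi)) as [Hlo Hhi].
  set (k := Int_part _) in *.
  assert (Hk : (0 <= k)%Z).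
  { assert (0 <= IZR (Z.of_nat m) * phi).
    { apply Rmult_le_pos; [apply IZR_le; lia | pose proof phi_gt1; lra]. }
    enough (-1 < k)%Z by lia. apply lt_IZR; lra. }
  repeat split; [exact Hk | |].
  - enough (golden_form k (Z.of_nat m) <= 0)%Z
      by (pose proof (golden_form_neq0 k (Z.of_nat m)); lia).
    apply le_mul_phi_iff; [lia | lia | exact Hlo].
  - enough (~ (golden_form (k + 1) (Z.of_nat m) <= 0)%Z)
      by (pose proof (golden_form_neq0 (k + 1) (Z.of_nat m)); lia).
    rewrite <- le_mul_phi_iff by lia; rewrite plus_IZR; lra.
Qed.

Lemma floor_phi_unique (m : nat) (k : Z) : (1 <= m)%nat -> (0 <= k)%Z ->
  (golden_form k (Z.of_nat m) < 0)%Z -> (0 < golden_form (k + 1) (Z.of_nat m))%Z ->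
  floor_phi m = k.
Proof.
  intros Hm Hk Hlo Hhi; unfold floor_phi, floorR; rewrite INR_IZR_INZ.
  symmetry; apply Int_part_spec; split.
  - enough (~ IZR (k + 1) <= IZR (Z.of_nat m) * phi) by (rewrite plus_IZR in H; lra).
    rewrite le_mul_phi_iff by lia; lia.
  - apply le_mul_phi_iff; lia.
Qed.

Lemma floor_phi_1 : floor_phi 1 = 1%Z.
Proof. apply floor_phi_unique; unfold golden_form; simpl; lia. Qed.

Lemma floor_phi_2 : floor_phi 2 = 3%Z.
Proof. apply floor_phi_unique; unfold golden_form; simpl; lia. Qed.

Section FloorOfFloor.
Variables (k K : nat).
Hypotheses (Hk : (1 <= k)%nat) (HK : Z.of_nat K = floor_phi k).

Lemma floor_phi_bounds : (k <= K < 2 * k)%nat.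
Proof.
  destruct (floor_phi_spec k Hk) as (_ & Hlo & Hhi).
  rewrite <- HK in Hlo, Hhi; unfold golden_form in Hlo, Hhi; nia.
Qed.

Lemma floor_phi_floor_phi : floor_phi K = (Z.of_nat K + Z.of_nat k - 1)%Z.
Proof.
  destruct (floor_phi_spec k Hk) as (_ & Hlo & Hhi); pose proof floor_phi_bounds.
  rewrite <- HK in Hlo, Hhi; unfold golden_form in Hlo, Hhi.
  apply floor_phi_unique; [lia | lia | |]; unfold golden_form; nia.
Qed.

Lemma floor_phi_succ_floor_phi : floor_phi (S K) = (Z.of_nat K + Z.of_nat k + 1)%Z.
Proof.
  destruct (floor_phi_spec k Hk) as (_ & Hlo & Hhi); pose proof floor_phi_bounds.
  rewrite <- HK in Hlo, Hhi; unfold golden_form in Hlo, Hhi.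
  apply floor_phi_unique; [lia | lia | |]; rewrite Nat2Z.inj_succ; unfold golden_form; nia.
Qed.

Lemma floor_phi_succ_succ_floor_phi : floor_phi (S k) = (Z.of_nat K + 2)%Z ->
  floor_phi (S (S K)) = (Z.of_nat K + Z.of_nat k + 2)%Z.
Proof.
  intros HK2.
  destruct (floor_phi_spec k Hk) as (_ & Hlo & Hhi); pose proof floor_phi_bounds.
  destruct (floor_phi_spec (S k) ltac:(lia)) as (_ & Hlo' & Hhi').
  rewrite <- HK in Hlo, Hhi; rewrite HK2, Nat2Z.inj_succ in Hlo', Hhi'.
  unfold golden_form in Hlo, Hhi, Hlo', Hhi'.
  apply floor_phi_unique; [lia | lia | |]; rewrite !Nat2Z.inj_succ; unfold golden_form; nia.
Qed.

End FloorOfFloor.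

Definition letter (x : nat) : Prop := x = 1%nat \/ x = 2%nat.

Lemma sigma_app (u v : list nat) : Defs.sigma (u ++ v) = Defs.sigma u ++ Defs.sigma v.
Proof. apply flat_map_app. Qed.

Lemma sigma_letters (w : list nat) : Forall letter (Defs.sigma w).
Proof.
  induction w as [|x w IH]; [constructor|].
  change (x :: w) with ([x] ++ w); rewrite sigma_app.
  apply Forall_app; split; [|exact IH].
  unfold Defs.sigma; simpl; destruct (Nat.eqb x 1);
    repeat apply Forall_cons; try apply Forall_nil; unfold letter; auto.
Qed.

Lemma Cw_letters (k : nat) : Forall letter (Cw k).
Proof. destruct k; [repeat constructor; left; reflexivity | apply sigma_letters]. Qed.

Lemma length_list_sum_sigma (w : list nat) : Forall letter w ->
  length (Defs.sigma w) = list_sum w /\ list_sum (Defs.sigma w) = (list_sum w + length w)%nat.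
Proof.
  induction 1 as [|x w [-> | ->] _ [IHl IHs]]; [split; reflexivity | |];
    change (?x :: w) with ([x] ++ w); rewrite sigma_app, !length_app, !list_sum_app, IHl, IHs;
    simpl; split; lia.
Qed.

Lemma length_list_sum_Cw (k : nat) :
  length (Cw k) = fib (S k) /\ list_sum (Cw k) = fib (S (S k)).
Proof.
  induction k as [|k [IHl IHs]]; [split; reflexivity|].
  destruct (length_list_sum_sigma (Cw k) (Cw_letters k)) as [Hl Hs].
  change (Cw (S k)) with (Defs.sigma (Cw k)).
  rewrite Hl, Hs, IHl, IHs; split; [reflexivity|].
  change (fib (S (S (S k)))) with (fib (S (S k)) + fib (S k))%nat; lia.
Qed.

Lemma Cw_SS (k : nat) : Cw (S (S k)) = Cw (S k) ++ Cw k.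
Proof.
  induction k as [|k IH]; [reflexivity|].
  change (Cw (S (S (S k)))) with (Defs.sigma (Cw (S (S k)))).
  rewrite IH at 1; apply sigma_app.
Qed.

(* [w] is a prefix of the word whose [i]-th letter (from 1) is
   [floor ((i + 1) phi) - floor (i phi)]; recall [floor_phi 1 = 1]. *)
Definition beatty_prefix (w : list nat) : Prop :=
  forall t, (t <= length w)%nat ->
    (Z.of_nat (list_sum (firstn t w)) + 1)%Z = floor_phi (S t).

Lemma beatty_prefix_nil : beatty_prefix [].
Proof.
  intros t Ht; replace t with 0%nat by (simpl in Ht; lia).
  rewrite floor_phi_1; reflexivity.
Qed.

Lemma beatty_prefix_snoc_iff (w : list nat) (x : nat) :
  beatty_prefix (w ++ [x]) <->
  beatty_prefix w /\ floor_phi (S (S (length w))) = (floor_phi (S (length w)) + Z.of_nat x)%Z.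
Proof.
  assert (Hfirst : forall t, (t <= length w)%nat -> firstn t (w ++ [x]) = firstn t w).
  { intros t Ht; rewrite firstn_app; replace (t - length w)%nat with 0%nat by lia.
    apply app_nil_r. }
  assert (Hall : firstn (S (length w)) (w ++ [x]) = w ++ [x])
    by (apply firstn_all2; rewrite length_app; simpl; lia).
  assert (Hlen : length (w ++ [x]) = S (length w))
    by (rewrite length_app; simpl; lia).
  unfold beatty_prefix at 1; rewrite Hlen; split.
  - intros H; split.
    + intros t Ht; rewrite <- Hfirst by exact Ht; apply H; lia.
    + rewrite <- (H (S (length w))), <- (H (length w)), Hall, Hfirst, firstn_all,
        list_sum_app by lia.
      simpl; lia.
  - intros [H Hx] t Ht.
    destruct (Nat.eq_dec t (S (length w))) as [->|Hne].
    + rewrite Hall, list_sum_app, Hx, <- (H (length w)), firstn_all by lia; simpl; lia.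
    + rewrite Hfirst by lia; apply H; lia.
Qed.

Lemma beatty_prefix_sigma (w : list nat) :
  Forall letter w -> beatty_prefix w -> beatty_prefix (Defs.sigma w).
Proof.
  induction w as [|x w IH] using rev_ind; [intros; exact beatty_prefix_nil|].
  intros Hletters Hw.
  apply Forall_app in Hletters as [Hletters Hx]; inversion_clear Hx as [|? ? Hx' _].
  apply beatty_prefix_snoc_iff in Hw as [Hw Hstep].
  specialize (IH Hletters Hw).
  destruct (length_list_sum_sigma w Hletters) as [Hlen _].
  set (k := S (length w)) in Hstep.
  set (K := S (list_sum w)).
  assert (HK : Z.of_nat K = floor_phi k).
  { unfold k; rewrite <- (Hw (length w)), firstn_all by lia; unfold K; lia. }
  assert (Hfloor : floor_phi K = (Z.of_nat K + Z.of_nat k - 1)%Z)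
    by (apply floor_phi_floor_phi; [lia | exact HK]).
  assert (Hjump : beatty_prefix (Defs.sigma w ++ [2%nat])).
  { apply beatty_prefix_snoc_iff; split; [exact IH|].
    rewrite Hlen; fold K.
    rewrite Hfloor, (floor_phi_succ_floor_phi k K) by (lia || exact HK); lia. }
  rewrite sigma_app; destruct Hx' as [-> | ->]; [exact Hjump|].
  change (Defs.sigma [2%nat]) with ([2%nat] ++ [1%nat]); rewrite app_assoc.
  apply beatty_prefix_snoc_iff; split; [exact Hjump|].
  rewrite length_app, Hlen, Nat.add_1_r; fold K.
  rewrite (floor_phi_succ_floor_phi k K), (floor_phi_succ_succ_floor_phi k K)
    by (lia || exact HK || (rewrite Hstep, <- HK; lia)); lia.
Qed.

Lemma beatty_prefix_Cw (k : nat) : beatty_prefix (Cw (S k)).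
Proof.
  induction k as [|k IH].
  - apply (beatty_prefix_snoc_iff []); split; [exact beatty_prefix_nil|].
    simpl; rewrite floor_phi_1, floor_phi_2; reflexivity.
  - apply beatty_prefix_sigma; [apply (Cw_letters (S k)) | exact IH].
Qed.

Lemma list_sum_firstn_Cw (k t : nat) : (t <= fib (S k))%nat ->
  Z.of_nat (list_sum (firstn t (Cw k))) =
  (floor_phi (fib (S (S k)) + 1 + t) - floor_phi (fib (S (S k)) + 1))%Z.
Proof.
  intros Ht.
  destruct (length_list_sum_Cw k) as [Hlen _], (length_list_sum_Cw (S k)) as [Hlen' _].
  pose proof (beatty_prefix_Cw (S k)) as H; rewrite Cw_SS in H.
  assert (Hprefix := H (length (Cw (S k)) + t)%nat).
  assert (Hwhole := H (length (Cw (S k)) + 0)%nat).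
  rewrite firstn_app_2, list_sum_app in Hprefix, Hwhole.
  rewrite length_app, Hlen' in *.
  replace (fib (S (S k)) + 1 + t)%nat with (S (fib (S (S k)) + t)) by lia.
  replace (fib (S (S k)) + 1)%nat with (S (fib (S (S k)) + 0)) by lia.
  rewrite <- Hprefix, <- Hwhole by (rewrite Hlen; lia); simpl; lia.
Qed.

Section Sequences.
Local Open Scope nat_scope.

Lemma fib_SS (k : nat) : fib (S (S k)) = fib (S k) + fib k.
Proof. reflexivity. Qed.

Lemma fib_SS_ge (k : nat) : S k <= fib (S (S k)).
Proof.
  induction k as [k IH] using lt_wf_ind.
  destruct k as [|[|k]]; [simpl; lia | simpl; lia |].
  rewrite fib_SS; pose proof (IH k ltac:(lia)); pose proof (IH (S k) ltac:(lia)); lia.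
Qed.

Lemma length_list_sum_concat_repeat (w : list nat) (h : nat) :
  length (concat (repeat w h)) = h * length w /\
  list_sum (concat (repeat w h)) = h * list_sum w.
Proof.
  induction h as [|h [IHl IHs]]; [split; reflexivity|].
  simpl; rewrite length_app, list_sum_app, IHl, IHs; split; reflexivity.
Qed.

Lemma firstn_concat_repeat (w : list nat) (h r t : nat) : h < r -> t <= length w ->
  firstn (h * length w + t) (concat (repeat w r)) = concat (repeat w h) ++ firstn t w.
Proof.
  revert r; induction h as [|h IH]; intros [|r] Hr Ht; try lia; simpl.
  - rewrite firstn_app; replace (t - length w) with 0 by lia; apply app_nil_r.
  - rewrite <- Nat.add_assoc, firstn_app_2, IH, app_assoc by lia; reflexivity.
Qed.

Lemma length_list_sum_Cblock (k : nat) :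
  length (Cblock (S k)) = 5 * fib (S k) /\ list_sum (Cblock (S k)) = 5 * fib (S (S k)).
Proof.
  unfold Cblock; rewrite Nat.sub_succ, Nat.sub_0_r.
  destruct (length_list_sum_concat_repeat (Cw k) 5) as [-> ->].
  destruct (length_list_sum_Cw k) as [-> ->]; split; reflexivity.
Qed.

Lemma cprefix_add (m j : nat) :
  cprefix (m + j) = cprefix m ++ concat (map Cblock (seq (S m) j)).
Proof. unfold cprefix; rewrite seq_app, map_app, concat_app; reflexivity. Qed.

Lemma cprefix_S (m : nat) : cprefix (S m) = cprefix m ++ Cblock (S m).
Proof.
  rewrite <- Nat.add_1_r, cprefix_add; simpl; rewrite app_nil_r, Nat.add_1_r; reflexivity.
Qed.

Lemma length_list_sum_cprefix (m : nat) :
  length (cprefix m) + 5 = 5 * fib (S (S m)) /\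
  list_sum (cprefix m) + 10 = 5 * fib (S (S (S m))).
Proof.
  induction m as [|m [IHl IHs]]; [split; reflexivity|].
  rewrite cprefix_S, length_app, list_sum_app.
  destruct (length_list_sum_Cblock m) as [-> ->].
  rewrite (fib_SS (S m)), (fib_SS (S (S m))); lia.
Qed.

Lemma cprefix_length_ge (m : nat) : m <= length (cprefix m).
Proof.
  pose proof (fib_SS_ge m); pose proof (proj1 (length_list_sum_cprefix m)); lia.
Qed.

Lemma c_nth (M i : nat) : i < length (cprefix M) -> c (S i) = nth i (cprefix M) 0.
Proof.
  intros Hi; unfold c; rewrite Nat.sub_succ, Nat.sub_0_r.
  pose proof (cprefix_length_ge (S i)).
  destruct (Nat.le_ge_cases (S i) M) as [Hle|Hge].
  - replace M with (S i + (M - S i)) by lia; rewrite cprefix_add, app_nth1 by lia; reflexivity.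
  - replace (S i) with (M + (S i - M)) by lia; rewrite cprefix_add, app_nth1 by lia; reflexivity.
Qed.

Lemma map_c_seq (M j : nat) : j <= length (cprefix M) ->
  map c (seq 1 j) = firstn j (cprefix M).
Proof.
  intros Hj; apply nth_ext with (d := 0) (d' := 0).
  - rewrite length_map, length_seq, length_firstn; lia.
  - intros i Hi; rewrite length_map, length_seq in Hi.
    rewrite nth_firstn; replace (i <? j) with true by (symmetry; apply Nat.ltb_lt, Hi).
    rewrite (nth_indep _ 0 (c 0)) by (rewrite length_map, length_seq; exact Hi).
    rewrite map_nth, seq_nth by exact Hi; apply c_nth; lia.
Qed.

Lemma list_sum_map_succ (f : nat -> nat) (l : list nat) :
  list_sum (map (fun x => f x + 1) l) = list_sum (map f l) + length l.
Proof. induction l as [|x l IH]; simpl; [reflexivity | rewrite IH; lia]. Qed.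

Lemma a_add1 (M N : nat) : N <= length (cprefix M) ->
  a (N + 1) = 6 + list_sum (firstn N (cprefix M)).
Proof.
  intros HN; unfold a; rewrite Nat.add_sub, (map_c_seq M N HN); reflexivity.
Qed.

Lemma b_add1 (M N : nat) : N <= length (cprefix M) ->
  b (N + 1) = 12 + list_sum (firstn N (cprefix M)) + N.
Proof.
  intros HN; unfold b, d; rewrite Nat.add_sub.
  change (fold_right Init.Nat.add 0 (map (fun n => c n + 1) (seq 1 N)))
    with (list_sum (map (fun n => c n + 1) (seq 1 N))).
  rewrite list_sum_map_succ, (map_c_seq M N HN), length_seq; lia.
Qed.

Lemma list_sum_window (m h t : nat) : h < 5 -> t <= fib (S m) ->
  list_sum (firstn (5 * (fib (S (S m)) - 1) + h * fib (S m) + t) (cprefix (S m))) + 10 =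
  5 * fib (S (S (S m))) + h * fib (S (S m)) + list_sum (firstn t (Cw m)).
Proof.
  intros Hh Ht.
  destruct (length_list_sum_cprefix m) as [Hlen Hsum].
  destruct (length_list_sum_Cw m) as [HlenCw HsumCw].
  destruct (length_list_sum_concat_repeat (Cw m) h) as [_ Hsumh].
  replace (5 * (fib (S (S m)) - 1)) with (length (cprefix m)) by lia.
  rewrite cprefix_S, <- Nat.add_assoc, firstn_app_2.
  unfold Cblock; rewrite Nat.sub_succ, Nat.sub_0_r, <- HlenCw, firstn_concat_repeat by lia.
  rewrite !list_sum_app, Hsumh, HsumCw; lia.
Qed.

End Sequences.

Theorem theorem4p4 :
  forall n h t : nat,
    (1 <= n)%nat -> (h <= 4)%nat -> (1 <= t)%nat -> (t <= fib n)%nat ->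
    Z.of_nat (a (5 * (fib (n + 1) - 1) + h * fib n + t + 1)) =
      (5 * Z.of_nat (fib (n + 2)) - 4 + Z.of_nat h * Z.of_nat (fib (n + 1))
       + floorR (INR (fib (n + 1) + 1 + t) * phi)
       - floorR (INR (fib (n + 1) + 1) * phi))%Z
    /\
    Z.of_nat (b (5 * (fib (n + 1) - 1) + h * fib n + t + 1)) =
      (5 * Z.of_nat (fib (n + 3)) + Z.of_nat h * Z.of_nat (fib (n + 2)) - 3
       + Z.of_nat t
       + floorR (INR (fib (n + 1) + 1 + t) * phi)
       - floorR (INR (fib (n + 1) + 1) * phi))%Z.
Proof.
  intros [|m] h t Hn Hh Ht Htn; [lia|].
  replace (S m + 1)%nat with (S (S m)) by lia.
  replace (S m + 2)%nat with (S (S (S m))) by lia.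
  replace (S m + 3)%nat with (S (S (S (S m)))) by lia.
  set (N := (5 * (fib (S (S m)) - 1) + h * fib (S m) + t)%nat).
  pose proof (fib_SS_ge m); pose proof (fib_SS (S (S m))); pose proof (fib_SS (S m)).
  assert (HN : (N <= length (cprefix (S m)))%nat).
  { pose proof (proj1 (length_list_sum_cprefix (S m))).
    pose proof (Nat.mul_le_mono_r h 4 (fib (S m)) Hh); unfold N; lia. }
  pose proof (list_sum_window m h t ltac:(lia) Htn) as Hwindow.
  pose proof (list_sum_firstn_Cw m t Htn) as Hword; unfold floor_phi in Hword.
  rewrite (a_add1 (S m) N HN), (b_add1 (S m) N HN); unfold N in *; split; nia.
Qed.
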